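(* Let $v\ge 2$, $n\ge 1$ and $\epsilon>0$, and let $(\mathcal{X},\mathcal{Y},\mathcal{I})$ be a $(v,b,r,k,\lambda)$-block design with $\mathcal{X}=\{1,\dots,v\}$. Let $Q$ be the associated block design mechanism, $Q(y|x)=\alpha e^\epsilon$ if $(x,y)\in\mathcal{I}$ and $Q(y|x)=\alpha$ otherwise, where $\alpha=\frac{1}{re^\epsilon+b-r}$. Let $X_1,\dots,X_n$ be i.i.d. with distribution $P\in\Delta_v$ and, independently for each $i$, $Y_i\sim Q(\cdot|X_i)$. Define, for $x\in\mathcal{X}$, $$\hat{P}_{n,x}(Y_1,\dots,Y_n)=\frac{1}{(r-\lambda)(e^\epsilon-1)}\left(\frac{N_x(Y_1,\dots,Y_n)}{n\alpha}-(\lambda e^\epsilon+(r-\lambda))\right),\qquad N_x(Y_1,\dots,Y_n)=\sum_{i=1}^n \mathbb{1}(Y_i\in\mathcal{I}_x).$$ Then $\hat{P}_n=(\hat P_{n,1},\dots,\hat P_{n,v})$ is unbiased, i.e. $\mathbb{E}_{P,Q}[\hat P_n]=P$ for all $P\in\Delta_v$; its risk under the squared loss $\ell_2^2(p,\hat p)=\sum_{x=1}^v (p_x-\hat p_x)^2$ is $$R_{v,n}(\ell_2^2,P,Q,\hat P_n)=\frac{1}{n}\left(\frac{(v-1)^2(ke^\epsilon+v-k)^2}{k(v-k)(e^\epsilon-1)^2v}+\frac{1}{v}-\sum_{x\in\mathcal{X}}P_x^2\right),$$ and its worst-case risk is $$\sup_{P\in\Delta_v}R_{v,n}(\ell_2^2,P,Q,\hat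 P_n)=\frac{(v-1)^2(ke^\epsilon+v-k)^2}{k(v-k)(e^\epsilon-1)^2nv},$$ the supremum being attained when $P$ is the uniform distribution.
   Context: $\Delta_v$ is the set of probability vectors on $\{1,\dots,v\}$. An incidence structure is a triple $(\mathcal{X},\mathcal{Y},\mathcal{I})$ with $\mathcal{I}\subset\mathcal{X}\times\mathcal{Y}$; write $\mathcal{I}_x=\{y:(x,y)\in\mathcal{I}\}$ and $\mathcal{I}^y=\{x:(x,y)\in\mathcal{I}\}$. For integers $v>k>0$, $b>r>\lambda\ge0$, a $(v,b,r,k,\lambda)$-block design is an incidence structure with $|\mathcal{X}|=v$, $|\mathcal{Y}|=b$, $|\mathcal{I}_x|=r$ for all $x$, $|\mathcal{I}^y|=k$ for all $y$, and $|\mathcal{I}_x\cap\mathcal{I}_{x'}|=\lambda$ for all $x\ne x'$. The risk is $R_{v,n}(\ell,P,Q,\hat P_n)=\mathbb{E}[\ell(P,\hat P_n(Y_1,\dots,Y_n))]$ with expectation over $X_i\sim P$ i.i.d. and $Y_i\sim Q(\cdot|X_i)$. *)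

From HB Require Import structures.
From mathcomp Require Import all_boot all_order all_algebra.
From mathcomp Require Import reals.
From mathcomp.analysis Require Import sequences exp.
Set Implicit Arguments. Unset Strict Implicit. Unset Printing Implicit Defensive.
Import Order.TTheory GRing.Theory Num.Theory.
Local Open Scope ring_scope.

(* Points X = 'I_v (i.e. {1..v} shifted to {0..v-1}), blocks Y = 'I_b,
   incidence relation I : 'I_v -> 'I_b -> bool. *)

Definition block_design (v b r k lam : nat) (I : 'I_v -> 'I_b -> bool) : Prop :=
  [/\ (0 < k < v)%N, (lam < r < b)%N,
      (forall x : 'I_v, #|[set y | I x y]| = r),
      (forall y : 'I_b, #|[set x | I x y]| = k) &
      (forall x x' : 'I_v, x != x' -> #|[set y | I x y && I x' y]| = lam)].

Definition in_simplex (R : realType) (v : nat) (P : 'I_v -> R) : Prop :=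
  (forall x, 0 <= P x) /\ \sum_(x < v) P x = 1.

Section Mech.
Variables (R : realType) (v b r lam : nat) (I : 'I_v -> 'I_b -> bool) (eps : R).

Definition bd_alpha : R := (r%:R * expR eps + b%:R - r%:R)^-1.

Definition bd_Q (x : 'I_v) (y : 'I_b) : R :=
  if I x y then bd_alpha * expR eps else bd_alpha.

Definition bd_N (n : nat) (ys : 'I_n -> 'I_b) (x : 'I_v) : nat :=
  #|[set i : 'I_n | I x (ys i)]|.

Definition bd_est (n : nat) (ys : 'I_n -> 'I_b) (x : 'I_v) : R :=
  ((r%:R - lam%:R) * (expR eps - 1))^-1 *
  ((@bd_N n ys x)%:R / (n%:R * bd_alpha) - (lam%:R * expR eps + (r%:R - lam%:R))).

Definition bd_expect (n : nat) (P : 'I_v -> R) (f : {ffun 'I_n -> 'I_b} -> R) : R :=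
  \sum_(xs : {ffun 'I_n -> 'I_v}) \sum_(ys : {ffun 'I_n -> 'I_b})
     (\prod_(i < n) (P (xs i) * bd_Q (xs i) (ys i))) * f ys.

Definition l22 (p q : 'I_v -> R) : R := \sum_(x < v) (p x - q x) ^+ 2.

Definition bd_risk (n : nat) (P : 'I_v -> R) : R :=
  @bd_expect n P (fun ys => l22 P (@bd_est n ys)).

End Mech.

Arguments bd_alpha {R} b r eps.
Arguments bd_Q {R v b} r I eps x y.
Arguments bd_N {v b} I n ys x.
Arguments bd_est {R v b} r lam I eps n ys x.
Arguments bd_expect {R v b} r I eps n P f.
Arguments bd_risk {R v b} r lam I eps n P.

From HB Require Import structures.
From mathcomp Require Import all_boot all_order all_algebra.
From mathcomp Require Import classical_sets reals.
From mathcomp.analysis Require Import sequences exp.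
From mathcomp Require Import ring.
Import Order.TTheory GRing.Theory Num.Theory.
Local Open Scope ring_scope.
Set Implicit Arguments. Unset Strict Implicit.

(* The Y_i are i.i.d. with law q(y) = sum_x P_x Q(y|x), so N_x is binomial with
   parameter p_x = q(I_x).  Counting incidences with r and lambda gives
   p_x = alpha ((lambda e^eps + r - lambda) + (r - lambda)(e^eps - 1) P_x), which is
   exactly what makes the estimator unbiased, with variance
   p_x (1 - p_x) / (n alpha^2 (r - lambda)^2 (e^eps - 1)^2).  Summed over x, the
   terms linear in P collapse since sum_x P_x = 1, and bk = vr, lambda (v - 1) = r (k - 1)
   reduce the constant to the stated one.  Finally sum_x P_x^2 >= 1/v, with equality
   for the uniform distribution. *)

Section IidExpectation.
Variables (R : comPzSemiRingType) (J T : finType) (mu : T -> R).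

Definition iid_expect (f : {ffun J -> T} -> R) : R :=
  \sum_(ys : {ffun J -> T}) (\prod_i mu (ys i)) * f ys.

Lemma eq_iid_expect (f g : {ffun J -> T} -> R) :
  f =1 g -> iid_expect f = iid_expect g.
Proof. by move=> fg; apply: eq_bigr => ys _; rewrite fg. Qed.

Lemma iid_expectZ (a : R) (f : {ffun J -> T} -> R) :
  iid_expect (fun ys => a * f ys) = a * iid_expect f.
Proof. by rewrite /iid_expect mulr_sumr; apply: eq_bigr => ys _; rewrite mulrCA. Qed.

Lemma iid_expect_sum (K : finType) (g : K -> {ffun J -> T} -> R) :
  iid_expect (fun ys => \sum_k g k ys) = \sum_k iid_expect (g k).
Proof. by rewrite /iid_expect exchange_big; apply: eq_bigr => ys _; rewrite mulr_sumr. Qed.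

Lemma iid_expect_prod (G : J -> T -> R) :
  iid_expect (fun ys => \prod_i G i (ys i)) = \prod_i \sum_y mu y * G i y.
Proof. by rewrite bigA_distr_bigA; apply: eq_bigr => ys _; rewrite big_split. Qed.

Hypothesis mu_sum1 : \sum_y mu y = 1.

Lemma iid_expect_coord_prod (S : {set J}) (h : J -> T -> R) :
  iid_expect (fun ys => \prod_(i in S) h i (ys i)) =
  \prod_(i in S) \sum_y mu y * h i y.
Proof.
pose G i y := if i \in S then h i y else 1.
rewrite (eq_iid_expect (g := fun ys => \prod_i G i (ys i))); last first.
  by move=> ys; rewrite big_mkcond.
rewrite iid_expect_prod [RHS]big_mkcond; apply: eq_bigr => i _; rewrite /G.
by case: ifP => // _; under eq_bigr do rewrite mulr1.
Qed.

Lemma iid_expect_cst (a : R) : iid_expect (fun _ => a) = a.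
Proof.
rewrite -[a]mulr1 iid_expectZ; congr (_ * _).
transitivity (\prod_(i : J) \sum_y mu y * 1).
  by rewrite -iid_expect_prod; apply: eq_iid_expect => ys; rewrite big1_eq.
by rewrite big1 // => i _; under eq_bigr do rewrite mulr1.
Qed.

Lemma iid_expect_cstD (a : R) (f : {ffun J -> T} -> R) :
  iid_expect (fun ys => a + f ys) = a + iid_expect f.
Proof.
rewrite /iid_expect; under eq_bigr do rewrite mulrDr.
by rewrite big_split /=; congr (_ + _); exact: (iid_expect_cst a).
Qed.

Lemma iid_expect_coord (i : J) (h : T -> R) :
  iid_expect (fun ys => h (ys i)) = \sum_y mu y * h y.
Proof.
have := iid_expect_coord_prod [set i] (fun _ => h).
by rewrite big_set1 => <-; apply: eq_iid_expect => ys; rewrite big_set1.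
Qed.

Lemma iid_expect_coord2 (i j : J) (h1 h2 : T -> R) : i != j ->
  iid_expect (fun ys => h1 (ys i) * h2 (ys j)) =
  (\sum_y mu y * h1 y) * (\sum_y mu y * h2 y).
Proof.
move=> nij; pose h l y := if l == i then h1 y else h2 y.
have i_notin_j : i \notin [set j] by rewrite inE.
have := iid_expect_coord_prod [set i; j] h.
rewrite big_setU1 //= big_set1 /h eqxx eq_sym (negbTE nij) => <-.
by apply: eq_iid_expect => ys; rewrite big_setU1 //= big_set1 eqxx eq_sym (negbTE nij).
Qed.

Lemma iid_expect_sum_coord (h : T -> R) :
  iid_expect (fun ys => \sum_i h (ys i)) = #|J|%:R * \sum_y mu y * h y.
Proof.
rewrite iid_expect_sum; under eq_bigr do rewrite iid_expect_coord.
by rewrite sumr_const mulr_natl.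
Qed.

Lemma iid_expect_sqr_sum_centered (h : T -> R) : \sum_y mu y * h y = 0 ->
  iid_expect (fun ys => (\sum_i h (ys i)) ^+ 2) = #|J|%:R * \sum_y mu y * h y ^+ 2.
Proof.
move=> h_centered.
rewrite (eq_iid_expect (g := fun ys => \sum_i \sum_j h (ys i) * h (ys j))); last first.
  by move=> ys; rewrite expr2 mulr_suml; apply: eq_bigr => i _; rewrite mulr_sumr.
transitivity (\sum_(i : J) \sum_y mu y * h y ^+ 2); last by rewrite sumr_const mulr_natl.
rewrite iid_expect_sum; apply: eq_bigr => i _.
rewrite iid_expect_sum (bigD1 i) //= big1 ?addr0 => [|j ji].
  transitivity (iid_expect (fun ys => h (ys i) ^+ 2)); last exact: iid_expect_coord.
  by apply: eq_iid_expect => ys; rewrite expr2.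
by rewrite iid_expect_coord2 1?eq_sym // h_centered mul0r.
Qed.

End IidExpectation.

Lemma card_set_sum (T : finType) (p : pred T) :
  #|[set x | p x]| = (\sum_x p x)%N.
Proof. by rewrite -sum1dep_card big_mkcond; apply: eq_bigr => x _; case: (p x). Qed.

Lemma natr_card_set (R : pzSemiRingType) (T : finType) (p : pred T) :
  #|[set x | p x]|%:R = \sum_x (p x : nat)%:R :> R.
Proof. by rewrite card_set_sum natr_sum. Qed.

Section BlockDesignCounting.
Variables (v b r k lam : nat) (I : 'I_v -> 'I_b -> bool).
Hypothesis D : block_design r k lam I.

Lemma block_design_bk : (b * k = v * r)%N.
Proof.
have [_ _ Hr Hk _] := D.
transitivity (\sum_(y < b) \sum_(x < v) I x y)%N.
  rewrite -[b in LHS]card_ord -sum_nat_const.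
  by apply: eq_bigr => y _; rewrite -(Hk y) card_set_sum.
rewrite exchange_big -[v in RHS]card_ord -sum_nat_const.
by apply: eq_bigr => x _; rewrite -(Hr x) card_set_sum.
Qed.

Lemma block_design_lam : (lam * (v - 1) + r = r * k)%N.
Proof.
have [/andP[_ kv] _ Hr Hk Hl] := D.
pose x : 'I_v := Ordinal (leq_ltn_trans (leq0n k) kv).
transitivity (\sum_(x' < v) \sum_(y < b) (I x y && I x' y))%N.
  rewrite (bigD1 x) //= [RHS]addnC; congr (_ + _)%N.
    rewrite subn1 mulnC -[in LHS](card_ord v) -(cardC1 x) -sum_nat_const.
    by apply: eq_bigr => x' x'x; rewrite -card_set_sum Hl // eq_sym.
  by rewrite -(Hr x) card_set_sum; apply: eq_bigr => y _; rewrite andbb.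
rewrite exchange_big -(Hr x) card_set_sum big_distrl /=; apply: eq_bigr => y _.
by case: (I x y); rewrite /= ?mul1n ?mul0n -?(Hk y) ?card_set_sum // big1.
Qed.

End BlockDesignCounting.

Lemma invn_le_sum_sqr (R : realFieldType) (v : nat) (P : 'I_v -> R) :
  (0 < v)%N -> \sum_x P x = 1 -> v%:R^-1 <= \sum_x P x ^+ 2.
Proof.
move=> v_gt0 P_sum1; have v_neq0 : v%:R != 0 :> R by rewrite pnatr_eq0 -lt0n.
rewrite -subr_ge0.
have -> : \sum_x P x ^+ 2 - v%:R^-1 = \sum_x (P x - v%:R^-1) ^+ 2.
  transitivity (\sum_x (P x ^+ 2 + (- 2 * v%:R^-1) * P x + v%:R^-1 ^+ 2)).
    by rewrite !big_split /= -mulr_sumr P_sum1 sumr_const card_ord; field.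
  by apply: eq_bigr => x _; ring.
by apply: sumr_ge0 => x _; exact: sqr_ge0.
Qed.

Section BlockDesignMechanism.
Variables (R : realType) (v b r k lam : nat) (I : 'I_v -> 'I_b -> bool) (eps : R).
Hypotheses (D : block_design r k lam I) (eps_gt0 : 0 < eps).

Local Notation alpha := (bd_alpha b r eps).
Local Notation Q := (bd_Q r I eps).
Local Notation slope := ((r%:R - lam%:R) * (expR eps - 1) : R).
Local Notation offset := (lam%:R * expR eps + (r%:R - lam%:R) : R).

Let expR_sub1_neq0 : expR eps - 1 != 0.
Proof. by rewrite subr_eq0 gt_eqF // expR_gt1. Qed.

Let r_sub_lam_neq0 : r%:R - lam%:R != 0 :> R.
Proof. by have [_ /andP[lr _] _ _ _] := D; rewrite subr_eq0 gt_eqF // ltr_nat. Qed.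

Let alpha_inv_neq0 : r%:R * expR eps + b%:R - r%:R != 0.
Proof.
have [_ /andP[_ rb] _ _ _] := D.
have -> : r%:R * expR eps + b%:R - r%:R = b%:R + r%:R * (expR eps - 1) by ring.
rewrite gt_eqF // (@lt_le_trans _ _ b%:R) ?ltr0n ?(leq_ltn_trans _ rb) //.
by rewrite lerDl mulr_ge0 // subr_ge0 ltW // expR_gt1.
Qed.

Let alpha_neq0 : alpha != 0.
Proof. by rewrite invr_eq0. Qed.

Lemma bd_QE x y : Q x y = alpha * (1 + (expR eps - 1) * (I x y : nat)%:R).
Proof. by rewrite /bd_Q; case: (I x y) => /=; ring. Qed.

Lemma bd_Q_sum1 x : \sum_y Q x y = 1.
Proof.
have [_ _ Hr _ _] := D.
under eq_bigr do rewrite bd_QE.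
rewrite -mulr_sumr big_split /= sumr_const card_ord -mulr_sumr -natr_card_set Hr.
by rewrite /bd_alpha; field.
Qed.

Lemma bd_Q_incidence x' x :
  \sum_y Q x' y * (I x y : nat)%:R = alpha * (offset + slope * (x' == x : nat)%:R).
Proof.
have [_ _ Hr _ Hl] := D.
transitivity (alpha * \sum_y ((I x y : nat)%:R + (expR eps - 1) * (I x' y && I x y : nat)%:R)).
  rewrite mulr_sumr; apply: eq_bigr => y _; rewrite bd_QE.
  by case: (I x' y); case: (I x y) => /=; ring.
rewrite big_split -mulr_sumr /= -!natr_card_set Hr; congr (_ * _).
case: eqVneq => [->|x'x] /=; last by rewrite Hl //; ring.
have -> : [set y | I x y && I x y] = [set y | I x y] by apply/setP => y; rewrite !inE andbb.
by rewrite Hr; ring.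
Qed.

Definition bd_marginal (P : 'I_v -> R) (y : 'I_b) : R := \sum_x P x * Q x y.

Definition bd_incidence_prob (P : 'I_v -> R) (x : 'I_v) : R :=
  \sum_y bd_marginal P y * (I x y : nat)%:R.

Lemma bd_expectE n P f : bd_expect r I eps n P f = iid_expect (bd_marginal P) f.
Proof.
rewrite /bd_expect exchange_big /=; apply: eq_bigr => ys _.
by rewrite -mulr_suml /bd_marginal bigA_distr_bigA.
Qed.

Local Notation bd_risk_factor :=
  ((v%:R - 1) ^+ 2 * (k%:R * expR eps + v%:R - k%:R) ^+ 2 /
   (k%:R * (v%:R - k%:R) * (expR eps - 1) ^+ 2 * v%:R) : R).

Lemma bd_risk_factorE :
  v%:R * (offset * (alpha^-1 - offset) / slope ^+ 2) + (alpha^-1 - 2 * offset) / slope =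
  bd_risk_factor + v%:R^-1.
Proof.
have [/andP[k_gt0 kv] /andP[lr _] _ _ _] := D.
rewrite /bd_alpha invrK.
have v_neq0 : v%:R != 0 :> R by rewrite pnatr_eq0 -lt0n (ltn_trans k_gt0).
have k_neq0 : k%:R != 0 :> R by rewrite pnatr_eq0 -lt0n.
have v_sub1_neq0 : v%:R - 1 != 0 :> R by rewrite subr_eq0 pnatr_eq1 gtn_eqF // (leq_trans _ kv).
have v_sub_k_neq0 : v%:R - k%:R != 0 :> R by rewrite subr_eq0 eqr_nat gtn_eqF.
have r_neq0 : r%:R != 0 :> R by rewrite pnatr_eq0 -lt0n (leq_ltn_trans _ lr).
have : (lam * (v - 1) + r)%:R = (r * k)%:R :> R by rewrite (block_design_lam D).
rewrite natrD !natrM natrB ?(ltn_trans k_gt0) // => lamE.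
have -> : lam%:R = (r%:R * k%:R - r%:R) / (v%:R - 1) :> R by rewrite -lamE addrK mulfK.
have : (b * k)%:R = (v * r)%:R :> R by rewrite (block_design_bk D).
rewrite !natrM => bE.
have -> : b%:R = v%:R * r%:R / k%:R :> R by rewrite -bE mulfK.
have r_mul_v_sub_k_neq0 : r%:R * (v%:R - 1) - (r%:R * k%:R - r%:R) != 0 :> R.
  have -> : r%:R * (v%:R - 1) - (r%:R * k%:R - r%:R) = r%:R * (v%:R - k%:R) :> R by ring.
  exact: mulf_neq0.
by field; rewrite v_neq0 expR_sub1_neq0 v_sub_k_neq0 k_neq0 v_sub1_neq0 r_mul_v_sub_k_neq0.
Qed.

Section Estimator.
Variables (n : nat) (P : 'I_v -> R).
Hypotheses (n_gt0 : (0 < n)%N) (P_sum1 : \sum_x P x = 1).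

Let n_neq0 : n%:R != 0 :> R.
Proof. by rewrite pnatr_eq0 -lt0n. Qed.

Lemma bd_marginal_sum1 : \sum_y bd_marginal P y = 1.
Proof.
rewrite /bd_marginal exchange_big /=.
by under eq_bigr do rewrite -mulr_sumr bd_Q_sum1 mulr1.
Qed.

Lemma bd_incidence_probE x : bd_incidence_prob P x = alpha * (offset + slope * P x).
Proof.
transitivity (\sum_x' P x' * \sum_y Q x' y * (I x y : nat)%:R).
  rewrite /bd_incidence_prob /bd_marginal; under eq_bigr do rewrite mulr_suml.
  rewrite exchange_big; apply: eq_bigr => x' _.
  by rewrite mulr_sumr; apply: eq_bigr => y _; rewrite mulrA.
under eq_bigr do rewrite bd_Q_incidence.
have pick_x : \sum_x' P x' * (x' == x : nat)%:R = P x.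
  by rewrite (bigD1 x) //= eqxx mulr1 big1 ?addr0 // => x' /negbTE ->; rewrite mulr0.
have -> : \sum_x' P x' * (alpha * (offset + slope * (x' == x : nat)%:R)) =
          alpha * offset * \sum_x' P x' + alpha * slope * \sum_x' P x' * (x' == x : nat)%:R.
  by rewrite !mulr_sumr -big_split; apply: eq_bigr => x' _ /=; ring.
by rewrite P_sum1 pick_x; ring.
Qed.

Lemma bd_incidence_centered x :
  \sum_y bd_marginal P y * ((I x y : nat)%:R - bd_incidence_prob P x) = 0.
Proof.
under eq_bigr do rewrite mulrBr.
by rewrite sumrB -mulr_suml bd_marginal_sum1 mul1r subrr.
Qed.

Lemma bd_incidence_var x :
  \sum_y bd_marginal P y * ((I x y : nat)%:R - bd_incidence_prob P x) ^+ 2 =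
  bd_incidence_prob P x * (1 - bd_incidence_prob P x).
Proof.
set p := bd_incidence_prob P x.
transitivity (\sum_y (bd_marginal P y * (I x y : nat)%:R * (1 - 2 * p) +
                      bd_marginal P y * p ^+ 2)).
  by apply: eq_bigr => y _; case: (I x y) => /=; ring.
by rewrite big_split /= -!mulr_suml bd_marginal_sum1 -/(bd_incidence_prob P x) -/p; ring.
Qed.

Lemma bd_estE (ys : 'I_n -> 'I_b) x :
  bd_est r lam I eps n ys x =
  P x + (n%:R * alpha * slope)^-1 * \sum_i ((I x (ys i) : nat)%:R - bd_incidence_prob P x).
Proof.
rewrite /bd_est /bd_N natr_card_set sumrB sumr_const card_ord bd_incidence_probE -mulr_natl.
by field; rewrite expR_sub1_neq0 r_sub_lam_neq0 alpha_neq0 n_neq0.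
Qed.

Lemma bd_est_unbiased x :
  bd_expect r I eps n P (fun ys => bd_est r lam I eps n ys x) = P x.
Proof.
rewrite bd_expectE; under eq_iid_expect do rewrite bd_estE.
rewrite (iid_expect_cstD bd_marginal_sum1) iid_expectZ.
rewrite (iid_expect_sum_coord _ bd_marginal_sum1 (fun y => (I x y : nat)%:R - _)).
by rewrite bd_incidence_centered !mulr0 addr0.
Qed.

Lemma bd_risk_coord x :
  bd_expect r I eps n P (fun ys => (P x - bd_est r lam I eps n ys x) ^+ 2) =
  (n%:R * (alpha * slope) ^+ 2)^-1 * (bd_incidence_prob P x * (1 - bd_incidence_prob P x)).
Proof.
rewrite bd_expectE (eq_iid_expect _ (g := fun ys => (n%:R * alpha * slope)^-1 ^+ 2 *
    (\sum_i ((I x (ys i) : nat)%:R - bd_incidence_prob P x)) ^+ 2)); last first.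
  by move=> ys; rewrite bd_estE; ring.
rewrite iid_expectZ (iid_expect_sqr_sum_centered _ bd_marginal_sum1 (bd_incidence_centered x)).
rewrite card_ord bd_incidence_var.
by field; rewrite expR_sub1_neq0 r_sub_lam_neq0 alpha_neq0 n_neq0.
Qed.

Lemma bd_riskE :
  bd_risk r lam I eps n P = n%:R^-1 * (bd_risk_factor + v%:R^-1 - \sum_x P x ^+ 2).
Proof.
rewrite /bd_risk /l22 bd_expectE iid_expect_sum.
under eq_bigr do rewrite -bd_expectE bd_risk_coord bd_incidence_probE.
pose A := offset * (alpha^-1 - offset) / slope ^+ 2.
pose B := (alpha^-1 - 2 * offset) / slope.
transitivity (n%:R^-1 * \sum_x (A + B * P x - P x ^+ 2)).
  rewrite mulr_sumr; apply: eq_bigr => x _; rewrite /A /B.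
  by field; rewrite expR_sub1_neq0 r_sub_lam_neq0 alpha_neq0 n_neq0.
rewrite sumrB big_split /= sumr_const card_ord -mulr_sumr P_sum1 -bd_risk_factorE.
by rewrite mulr_natl mulr1.
Qed.

End Estimator.
End BlockDesignMechanism.

Local Open Scope classical_set_scope.

Lemma sup_image_max (R : realType) (T : Type) (S : set T) (f : T -> R) (u : T) :
  S u -> (forall x, S x -> f x <= f u) -> sup (f @` S) = f u.
Proof.
move=> Su f_le; have f_ub : ubound (f @` S) (f u) by move=> _ [x Sx <-]; exact: f_le.
apply/eqP; rewrite eq_le ge_sup //=; last by exists (f u), u.
by apply: ub_le_sup; [exists (f u) | exists u].
Qed.

Unset Implicit Arguments.

Theorem theorem1 (R : realType) (v b r k lam n : nat) (eps : R)
  (I : 'I_v -> 'I_b -> bool) :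
  (2 <= v)%N -> (1 <= n)%N -> 0 < eps ->
  block_design r k lam I ->
  let worst : R :=
    ((v%:R - 1) ^+ 2 * (k%:R * expR eps + v%:R - k%:R) ^+ 2) /
    (k%:R * (v%:R - k%:R) * (expR eps - 1) ^+ 2 * n%:R * v%:R) in
  let unif : 'I_v -> R := fun _ => v%:R^-1 in
  [/\ (forall P : 'I_v -> R, in_simplex P ->
         forall x : 'I_v,
           bd_expect r I eps n P (fun ys => bd_est r lam I eps n ys x) = P x),
      (forall P : 'I_v -> R, in_simplex P ->
         bd_risk r lam I eps n P =
         n%:R^-1 * (((v%:R - 1) ^+ 2 * (k%:R * expR eps + v%:R - k%:R) ^+ 2) /
                     (k%:R * (v%:R - k%:R) * (expR eps - 1) ^+ 2 * v%:R)
                    + v%:R^-1 - \sum_(x < v) P x ^+ 2)),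
      sup [set bd_risk r lam I eps n P | P in [set P | in_simplex P]] = worst &
      bd_risk r lam I eps n unif = worst].
Proof.
move=> v_ge2 n_gt0 eps_gt0 D worst unif.
have riskE := bd_riskE D eps_gt0 n_gt0.
have v_neq0 : v%:R != 0 :> R by rewrite pnatr_eq0 -lt0n (ltn_trans _ v_ge2).
have unif_sum1 : \sum_x unif x = 1 by rewrite /unif sumr_const card_ord; field.
have unif_sqr : \sum_x unif x ^+ 2 = v%:R^-1.
  by rewrite /unif sumr_const card_ord; field.
have risk_unif : bd_risk r lam I eps n unif = worst.
  by rewrite riskE // unif_sqr addrK /worst !invfM; ring.
split=> [P [_ P_sum1] x | P [_ P_sum1] | | //].
- exact (bd_est_unbiased D eps_gt0 n_gt0 P_sum1 x).
- exact: riskE P_sum1.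
rewrite -risk_unif; apply: sup_image_max => [|P [_ P_sum1]].
  by split=> // x; rewrite /unif invr_ge0 ler0n.
rewrite !riskE // ler_wpM2l ?invr_ge0 ?ler0n // lerD2l lerN2 unif_sqr.
exact: invn_le_sum_sqr (ltn_trans _ v_ge2) P_sum1.
Qed.
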